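(* Let $n\ge 2$ and let $\mathcal M_{2n}$ be the Möbius ladder on $2n$ vertices. Then for every vertex $v$ of $\mathcal M_{2n}$, $\gamma_M(\mathcal M_{2n}-v)=\gamma_M(\mathcal M_{2n})-1$; that is, every vertex of $\mathcal M_{2n}$ is a 1-critical-vertex.
   Context: The Möbius ladder $\mathcal M_{2n}$ has vertices $v_1,\dots,v_{2n}$, the cycle edges $v_iv_{i+1}$ ($i=1,\dots,2n$, indices mod $2n$) and the rungs $v_iv_{n+i}$ ($i=1,\dots,n$). $\gamma_M(H)$ is the maximum genus of a connected graph $H$ (largest $k$ such that $H$ embeds cellularly in the orientable surface of genus $k$). A vertex $v$ is a 1-critical-vertex of $G$ if $G-v$ is connected and $\gamma_M(G-v)=\gamma_M(G)-1$. *)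

From mathcomp Require Import all_boot all_order all_fingroup.
Set Implicit Arguments. Unset Strict Implicit. Unset Printing Implicit Defensive.

(* A simple graph is a finite type T with a symmetric irreflexive relation e.
   Darts (directed edges) are the pairs p : T * T with e p.1 p.2. *)
Section Genus.
Variables (T : finType) (e : rel T).

Definition is_dart (p : T * T) : bool := e p.1 p.2.

(* A rotation system (combinatorial description of a cellular embedding in an
   orientable surface, Heffter-Edmonds-Ringel): a permutation r of T * T that
   fixes non-darts, maps each dart to a dart with the same tail, and cyclically
   permutes (single orbit) the darts leaving each vertex. *)
Definition rotation_system (r : {perm (T * T)}) : bool :=
  [&& [forall p, ~~ is_dart p ==> (r p == p)],
      [forall p, is_dart p ==> is_dart (r p) && ((r p).1 == p.1)]
    & [forall p, forall q,
         [&& is_dart p, is_dart q & p.1 == q.1] ==> fconnect r p q]].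

Definition face_step (r : {perm (T * T)}) (p : T * T) : T * T := r (p.2, p.1).

Definition nfaces (r : {perm (T * T)}) : nat := fcard (face_step r) is_dart.

Definition nedges : nat := #|[pred p | is_dart p]| %/ 2.

(* Euler: |V| - |E| + |F| = 2 - 2g *)
Definition emb_genus (r : {perm (T * T)}) : nat :=
  (2 + nedges - (#|T| + nfaces r))./2.

Definition max_genus : nat :=
  \max_(r : {perm (T * T)} | rotation_system r) emb_genus r.

Definition connected_graph : Prop := forall x y : T, connect e x y.

End Genus.

Definition del_vertex (T : finType) (v : T) := {x : T | x != v}.
Definition del_rel (T : finType) (e : rel T) (v : T) : rel (del_vertex v) :=
  fun x y => e (val x) (val y).

(* Moebius ladder M_{2n}: vertex v_{i+1} is i : 'I_(2n); cycle edges
   i ~ i+1 (mod 2n) and rungs i ~ i+n (mod 2n). *)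
Definition mobius_adj (n : nat) : rel 'I_(n.*2) :=
  fun i j => [|| (i.+1 %% n.*2 == j), (j.+1 %% n.*2 == i) | ((i + n) %% n.*2 == j)].
Arguments mobius_adj : clear implicits.
Arguments del_rel {T} e v.
Arguments del_vertex {T} v.

From mathcomp Require Import all_boot all_order all_fingroup zify.
Set Implicit Arguments. Unset Strict Implicit. Unset Printing Implicit Defensive.

(* The maximum genus of a graph with cycle rank b is at most floor(b/2), since
   every embedding has a face, and Euler's formula shows that it is attained
   by any rotation system with at most 1 + (b mod 2) faces.  M_2n has cycle
   rank n + 1, and M_2n - v, still connected through the rim, has cycle rank
   n - 1.  On both graphs take the rotation that visits the neighbours of each
   vertex in the order +1, -1, +n, except at v where the order is +1, +n, -1.
   Its face walk alternates rim and rung darts and advances two rim positions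
   per round, while the backward rim darts join it through v; tracing it gives
   one face for n odd and two for n even.  Hence
   gamma_M(M_2n) = floor((n+1)/2) = gamma_M(M_2n - v) + 1. *)

Lemma fconnect_step (T : finType) (f : T -> T) x y : f x = y -> fconnect f x y.
Proof. by move=> <-; exact: fconnect1. Qed.

Lemma connect_chain (T : finType) (g : rel T) (f : nat -> T) s a b :
    0 < s -> (forall j, a <= j -> j + s <= b -> connect g (f j) (f (j + s))) ->
  a <= b -> s %| b - a -> connect g (f a) (f b).
Proof.
move=> s_gt0 step le_ab /dvdnP [k def_k].
have -> : b = a + k * s by lia.
have : a + k * s <= b by lia.
elim: k {def_k} => [|k IHk] le_kb; first by rewrite addn0.
rewrite mulSn in le_kb; apply: connect_trans (IHk _) _; first lia.
have -> : a + k.+1 * s = a + k * s + s by rewrite mulSn; lia.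
by apply: step; lia.
Qed.

Lemma sum_del_vertex (T : finType) (v : T) (f : T -> nat) :
  \sum_(x : del_vertex v) f (val x) = \sum_(y | y != v) f y.
Proof.
rewrite (reindex_omap (val : del_vertex v -> T) insub) => [|y y_neq_v]; last first.
  by rewrite insubT.
by apply: eq_bigl => -[y y_neq_v] /=; rewrite insubT ?y_neq_v /= eqxx.
Qed.

(** * Faces of rotation systems *)

Section FaceTracing.
Variables (T : finType) (e : rel T).

Lemma face_step_inj (r : {perm T * T}) : injective (face_step r).
Proof. by move=> [a b] [c d] /perm_inj [-> ->]. Qed.

Lemma face_connect_sym (r : {perm T * T}) : connect_sym (frel (face_step r)).
Proof. exact: fconnect_sym (@face_step_inj r). Qed.

Lemma nfaces_le_size (r : {perm T * T}) (s : seq (T * T)) :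
    (forall p, is_dart e p -> exists2 q, q \in s & fconnect (face_step r) q p) ->
  nfaces e r <= size s.
Proof.
move=> cover; rewrite /nfaces.
apply: leq_trans (_ : #|[pred x in map (froot (face_step r)) s]| <= _);
  last by rewrite (leq_trans (card_size _)) // size_map.
apply: subset_leq_card; apply/subsetP => p; rewrite !inE => /andP [/eqP rootp dp].
have [q qs qp] := cover p dp.
apply/mapP; exists q => //; rewrite -rootp.
exact/esym/(rootP (face_connect_sym r)).
Qed.

Lemma nfaces_le_two (r : {perm T * T}) (q0 q1 : T * T) (b : bool) :
    (forall p, is_dart e p ->
       fconnect (face_step r) q0 p \/ b /\ fconnect (face_step r) q1 p) ->
  nfaces e r <= 1 + b.
Proof.
move=> cover; have -> : 1 + b = size (if b then [:: q0; q1] else [:: q0]).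
  by case: (b).
apply: nfaces_le_size => p /cover [q0p | [bT q1p]].
  by exists q0 => //; case: (b); rewrite !inE eqxx.
by exists q1; rewrite // bT !inE eqxx orbT.
Qed.

Hypothesis e_sym : symmetric e.

Lemma nfaces_gt0 (r : {perm T * T}) p :
  rotation_system e r -> is_dart e p -> 0 < nfaces e r.
Proof.
case/and3P => /forallP fix_nondart /forallP dart_to_dart _ dp.
apply/fcard_gt0P; [exact: face_step_inj | | by exists p].
move=> x y /eqP <- {y}; rewrite /face_step !unfold_in.
have -> : e x.1 x.2 = is_dart e (x.2, x.1) by rewrite /is_dart e_sym.
have [dx | ndx] := boolP (is_dart e (x.2, x.1)).
  by have /implyP/(_ dx)/andP[dr _] := dart_to_dart (x.2, x.1); exact: esym dr.
by have /implyP/(_ ndx)/eqP -> := fix_nondart (x.2, x.1); exact/esym/negbTE.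
Qed.

Definition cycle_rank : nat := nedges e + 1 - #|T|.

(* Euler's formula gives emb_genus r = (cycle_rank + 1 - nfaces r)./2, so a
   single face is optimal, and a second one costs nothing when the rank is odd. *)
Lemma max_genusE (r : {perm T * T}) p :
    is_dart e p -> rotation_system e r -> nfaces e r <= 1 + odd cycle_rank ->
  max_genus e = cycle_rank./2.
Proof.
move=> dp rs few_faces; apply/eqP; rewrite eqn_leq; apply/andP; split.
  apply/bigmax_leqP => r' rs'; have := nfaces_gt0 rs' dp.
  by rewrite /emb_genus /cycle_rank => ?; apply: half_leq; lia.
apply: leq_trans (_ : _ <= emb_genus e r) _; last exact: leq_bigmax_cond.
rewrite /emb_genus; move: few_faces; rewrite /cycle_rank.
have := odd_double_half (nedges e + 1 - #|T|).
case: odd => /= rank few_faces; last by apply: half_leq; lia.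
set k := (nedges e + 1 - #|T|)./2 in rank *.
by rewrite -[k]doubleK; apply: half_leq; lia.
Qed.

Variable nb : T -> seq T.
Hypothesis nbE : forall x y, e x y = (y \in nb x).
Hypothesis nb_uniq : forall x, uniq (nb x).

Definition rot_nb_fun (p : T * T) : T * T :=
  if e p.1 p.2 then (p.1, next (nb p.1) p.2) else p.

Lemma rot_nb_fun_inj : injective rot_nb_fun.
Proof.
move=> [x y] [x' y']; rewrite /rot_nb_fun /=.
case: (boolP (e x y)) => exy; case: (boolP (e x' y')) => exy' //=.
- by case=> <- /(congr1 (prev (nb x))); rewrite !prev_next // => ->.
- by case=> ex ey; move: exy'; rewrite -ey -ex nbE mem_next -nbE exy.
- by case=> ex ey; move: exy; rewrite ey ex nbE mem_next -nbE exy'.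
Qed.

Definition rot_nb : {perm T * T} := perm rot_nb_fun_inj.

Lemma iter_rot_nb k x y : e x y ->
  iter k rot_nb (x, y) = (x, iter k (next (nb x)) y) /\ e x (iter k (next (nb x)) y).
Proof.
move=> exy; elim: k => [|k [IH1 IH2]] //=.
by rewrite IH1 permE /rot_nb_fun /= IH2 nbE mem_next -nbE.
Qed.

Lemma rotation_system_rot_nb : rotation_system e rot_nb.
Proof.
apply/and3P; split.
- apply/forallP => p; apply/implyP => np.
  by rewrite permE /rot_nb_fun ifN.
- apply/forallP => [[x y]]; apply/implyP; rewrite /is_dart /= => exy.
  by rewrite permE /rot_nb_fun /= exy /= nbE mem_next -nbE exy eqxx.
- apply/forallP => [[x y]]; apply/forallP => [[x' z]]; apply/implyP.
  rewrite /is_dart /= => /and3P [exy exz /eqP ex]; subst x'.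
  have: fconnect (next (nb x)) y z.
    by rewrite (fconnect_cycle (cycle_next (nb_uniq x))) -?nbE.
  move/iter_findex => <-.
  have [<- _] := iter_rot_nb (findex (next (nb x)) y z) exy.
  exact: fconnect_iter.
Qed.

Lemma face_step_rot_nb x y : e y x -> face_step rot_nb (x, y) = (y, next (nb y) x).
Proof. by move=> eyx; rewrite /face_step permE /rot_nb_fun /= eyx. Qed.

Lemma card_darts_nb : #|[pred p | is_dart e p]| = \sum_x size (nb x).
Proof.
transitivity (\sum_(p : T * T) (e p.1 p.2 : nat)).
  rewrite -sum1_card big_mkcond /=; apply: eq_bigr => p _.
  by rewrite inE /is_dart; case: (e _ _).
rewrite -(pair_big xpredT xpredT (fun x y => (e x y : nat))) /=.
apply: eq_bigr => x _; rewrite -(card_uniqP (nb_uniq x)) -sum1_card.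
by rewrite [RHS]big_mkcond; apply: eq_bigr => y _; rewrite nbE; case: (_ \in _).
Qed.

End FaceTracing.

(** * The Moebius ladder *)

Section ModularWindow.
Variable N : nat.

Lemma eqn_mod_window a b : a <= b -> b < a + N + N + N ->
  (a == b %[mod N]) = [|| b == a, b == a + N | b == a + N + N].
Proof.
move=> le_ab lt_b; rewrite eq_sym eqn_mod_dvd //; apply/idP/idP.
  case/dvdnP => q def_q; have : q < 3 by nia.
  by case: q def_q => [|[|[|q]]] //= def_q _; lia.
case/or3P => /eqP ->; rewrite ?subnn ?dvdn0 //.
  by rewrite addKn dvdnn.
by rewrite -addnA addKn dvdn_add.
Qed.

Lemma eqn_mod_near a b : a < b + N + N + N -> b < a + N + N + N ->
  (a == b %[mod N]) =
    [|| a == b, a == b + N, a + N == b, a == b + N + N | a + N + N == b].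
Proof.
move=> lt_a lt_b; case: (leqP a b) => le_ab.
  by rewrite eqn_mod_window //; lia.
by rewrite eq_sym eqn_mod_window //; lia.
Qed.

Lemma eqn_mod_nearT a b :
    a = b \/ a = b + N \/ a + N = b \/ a = b + N + N \/ a + N + N = b ->
  (a == b %[mod N]) = true.
Proof. by case=> [->|[->|[<-|[->|<-]]]]; rewrite ?modnDr eqxx. Qed.

Lemma eqn_mod_nearF a b : a < b + N + N + N -> b < a + N + N + N ->
    ~~ [|| a == b, a == b + N, a + N == b, a == b + N + N | a + N + N == b] ->
  (a == b %[mod N]) = false.
Proof. by move=> lt_a lt_b /negbTE; rewrite eqn_mod_near. Qed.

End ModularWindow.

(* [decide_mod] evaluates each [a %% N == b %% N] whose sides are linear and
   within 3N of each other, by reducing it to linear equations.  Hypotheses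
   mentioning [%%] are cleared before calling [lia]: [zify] would turn each of
   them into a division problem, which makes [lia] very slow. *)
Ltac clear_mod := repeat match goal with H : context [_ %% _] |- _ => clear H end.
Ltac lia_nomod := clear_mod; lia.
Ltac decide_mod1 := match goal with |- context [?a %% ?N == ?b %% ?N] =>
   first [ rewrite (@eqn_mod_nearF N a b); [|lia_nomod|lia_nomod|lia_nomod]
         | rewrite (@eqn_mod_nearT N a b); [|lia_nomod] ] end.
Ltac decide_mod := repeat decide_mod1; try done.

Lemma next_seq3 (T : eqType) (p q s x : T) : next [:: p; q; s] x =
  if x == p then q else if x == q then s else if x == s then p else x.
Proof. by []. Qed.

Section MobiusLadder.
Variables (n : nat) (n_ge2 : 2 <= n) (v : 'I_(n.*2)).
Local Notation N := (n.*2).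

Lemma N_gt0 : 0 < N. Proof. lia. Qed.

(* Vertices are addressed by their offset from v.  Adjacency only depends on
   offsets (mobius_adj_vtx), so the faces are traced once, with v at offset 0. *)
Definition vtx (i : nat) : 'I_N := Ordinal (ltn_pmod (v + i) N_gt0).

Lemma vtx_eq i j : (vtx i == vtx j) = (i == j %[mod N]).
Proof. by rewrite -val_eqE /= eqn_modDl. Qed.

Lemma vtx0 : vtx 0 = v.
Proof. by apply: val_inj; rewrite /= addn0 modn_small. Qed.

Lemma vtx_eq_v i : (vtx i == v) = (i == 0 %[mod N]).
Proof. by rewrite -vtx0 vtx_eq. Qed.

Lemma vtx_congr i j : i = j %[mod N] -> vtx i = vtx j.
Proof. by move=> eq_ij; apply/eqP; rewrite vtx_eq eq_ij. Qed.

Definition offset (y : 'I_N) : nat := (y + (N - v)) %% N.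

Lemma offset_lt y : offset y < N. Proof. exact: ltn_pmod N_gt0. Qed.

Lemma offsetK : cancel offset vtx.
Proof.
move=> y; apply: val_inj => /=; rewrite modnDmr.
have -> : v + (y + (N - v)) = y + N by have := ltn_ord v; lia.
by rewrite modnDr modn_small.
Qed.

Lemma offset_vtx i : offset (vtx i) = i %[mod N].
Proof.
rewrite /offset /= modnDml modn_mod.
have -> : v + i + (N - v) = i + N by have := ltn_ord v; lia.
by rewrite modnDr.
Qed.

Lemma vtx_offsetD i c : vtx (offset (vtx i) + c) = vtx (i + c).
Proof. by apply: vtx_congr; rewrite -modnDml offset_vtx modnDml. Qed.

Lemma mobius_adj_vtx i j : mobius_adj n (vtx i) (vtx j) =
  [|| j == i + 1 %[mod N], i == j + 1 %[mod N] | j == i + n %[mod N]].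
Proof.
have shift k l c : ((v + k) %% N + c == v + l %[mod N]) = (k + c == l %[mod N]).
  by rewrite modnDml -addnA eqn_modDl.
rewrite /mobius_adj /= -(addn1 ((v + i) %% N)) -(addn1 ((v + j) %% N)) !shift.
by rewrite (eq_sym ((i + 1) %% N)) (eq_sym ((j + 1) %% N)) (eq_sym ((i + n) %% N)).
Qed.

Lemma eqn_mod_add1_sub1 i j : (i == j + 1 %[mod N]) = (j == i + (N - 1) %[mod N]).
Proof.
rewrite -(eqn_modDr (N - 1)).
have -> : j + 1 + (N - 1) = j + N by lia.
by rewrite modnDr eq_sym.
Qed.

Lemma eqn_mod_addn_sym i j : (j == i + n %[mod N]) = (i == j + n %[mod N]).
Proof.
rewrite -(eqn_modDr n).
have -> : i + n + n = i + N by lia.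
by rewrite modnDr eq_sym.
Qed.

Lemma mobius_adj_sym : symmetric (mobius_adj n).
Proof.
move=> x y; rewrite -(offsetK x) -(offsetK y) !mobius_adj_vtx eqn_mod_addn_sym.
by bool_congr.
Qed.

Definition mobius_nb (y : 'I_N) : seq 'I_N :=
  let i := offset y in
  if y == v then [:: vtx (i + 1); vtx (i + n); vtx (i + (N - 1))]
  else [:: vtx (i + 1); vtx (i + (N - 1)); vtx (i + n)].

Lemma mobius_nb_vtx i : mobius_nb (vtx i) =
  if i == 0 %[mod N] then [:: vtx (i + 1); vtx (i + n); vtx (i + (N - 1))]
  else [:: vtx (i + 1); vtx (i + (N - 1)); vtx (i + n)].
Proof. by rewrite /mobius_nb vtx_eq_v !vtx_offsetD. Qed.

Lemma mem_mobius_nb i j : (vtx j \in mobius_nb (vtx i)) =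
  [|| j == i + 1 %[mod N], j == i + (N - 1) %[mod N] | j == i + n %[mod N]].
Proof.
rewrite mobius_nb_vtx; case: ifP => _; rewrite !inE !vtx_eq //.
by congr (_ || _); apply: orbC.
Qed.

Lemma mobius_nbE x y : mobius_adj n x y = (y \in mobius_nb x).
Proof.
rewrite -(offsetK x) -(offsetK y) mobius_adj_vtx mem_mobius_nb.
by rewrite (eqn_mod_add1_sub1 (offset x)).
Qed.

Lemma mobius_nb_uniq x : uniq (mobius_nb x).
Proof.
rewrite -(offsetK x) mobius_nb_vtx; have := offset_lt x; move: (offset x) => i lt_iN.
by case: ifP => _; rewrite /= !inE !vtx_eq; decide_mod.
Qed.

Lemma size_mobius_nb y : size (mobius_nb y) = 3.
Proof. by rewrite /mobius_nb; case: ifP. Qed.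

Definition rotM : {perm 'I_N * 'I_N} := rot_nb mobius_nbE mobius_nb_uniq.
Local Notation faceM := (face_step rotM).
Local Notation same_faceM := (fconnect faceM).

Definition dart (c i : nat) : 'I_N * 'I_N := (vtx i, vtx (i + c)).
Local Notation fwd := (dart 1).
Local Notation back := (dart (N - 1)).
Local Notation rung := (dart n).

Lemma dart_congr c i j : i = j %[mod N] -> dart c i = dart c j.
Proof.
by move=> /eqP eq_ij; congr pair; apply/vtx_congr/eqP; rewrite ?eqn_modDr.
Qed.

Lemma faceM_fwd i :
  faceM (fwd i) = if i + 1 == 0 %[mod N] then fwd (i + 1) else rung (i + 1).
Proof.
rewrite /dart face_step_rot_nb; last by rewrite mobius_adj_vtx; decide_mod.
by rewrite mobius_nb_vtx; case: ifP => _; rewrite next_seq3 !vtx_eq; decide_mod.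
Qed.

Lemma faceM_rung i :
  faceM (rung i) = if i + n == 0 %[mod N] then back (i + n) else fwd (i + n).
Proof.
rewrite /dart face_step_rot_nb; last by rewrite mobius_adj_vtx; decide_mod.
by rewrite mobius_nb_vtx; case: ifP => _; rewrite next_seq3 !vtx_eq; decide_mod.
Qed.

Lemma faceM_back i : faceM (back i) =
  if i + (N - 1) == 0 %[mod N] then rung (i + (N - 1)) else back (i + (N - 1)).
Proof.
rewrite /dart face_step_rot_nb; last by rewrite mobius_adj_vtx; decide_mod.
by rewrite mobius_nb_vtx; case: ifP => _; rewrite next_seq3 !vtx_eq; decide_mod.
Qed.

Lemma same_faceM_fwd_add1n i : i < N -> i != n - 1 -> i != N - 1 ->
  same_faceM (fwd i) (fwd (i + 1 + n)).
Proof.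
move=> *; apply: (connect_trans (y := rung (i + 1))).
  by apply: fconnect_step; rewrite faceM_fwd; decide_mod.
by apply: fconnect_step; rewrite faceM_rung; decide_mod.
Qed.

Lemma same_faceM_fwd_add2 i : i < N -> i != n - 2 -> i != n - 1 ->
  i != N - 2 -> i != N - 1 -> same_faceM (fwd i) (fwd (i + 2)).
Proof.
move=> *; apply: connect_trans (same_faceM_fwd_add1n _ _ _) _; try lia.
apply: (connect_trans (y := rung (i + 1 + n + 1))).
  by apply: fconnect_step; rewrite faceM_fwd; decide_mod.
apply: fconnect_step; rewrite faceM_rung; decide_mod.
by apply: dart_congr; apply/eqP; decide_mod.
Qed.

Lemma same_faceM_fwd_even_gap a b : a <= b -> 2 %| b - a ->
    (forall j, a <= j -> j + 2 <= b ->
       [&& j < N, j != n - 2, j != n - 1, j != N - 2 & j != N - 1]) ->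
  same_faceM (fwd a) (fwd b).
Proof.
move=> le_ab even_gap ok.
apply: (connect_chain (f := fwd) (s := 2)) => // j le_aj le_jb.
by case/and5P: (ok j le_aj le_jb) => *; apply: same_faceM_fwd_add2.
Qed.

Ltac fwd_gapM :=
  apply: same_faceM_fwd_even_gap; [lia | rewrite dvdn2; lia | move=> *; lia].

Lemma same_faceM_fwd0 : same_faceM (fwd 0) (fwd (n + 1)).
Proof. by rewrite (_ : n + 1 = 0 + 1 + n); [apply: same_faceM_fwd_add1n | ]; lia. Qed.

Lemma same_faceM_fwdn : same_faceM (fwd n) (fwd 1).
Proof.
apply: connect_trans (same_faceM_fwd_add1n _ _ _) _; try lia.
by rewrite (@dart_congr _ _ 1) //; apply/eqP; decide_mod.
Qed.

Lemma same_faceM_fwd_last : same_faceM (fwd (N - 1)) (fwd 0).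
Proof.
apply: fconnect_step; rewrite faceM_fwd; decide_mod.
by apply: dart_congr; apply/eqP; decide_mod.
Qed.

Lemma same_faceM_fwd_lt i : i < N ->
  same_faceM (fwd 0) (fwd i) \/ ~~ odd n /\ same_faceM (fwd 1) (fwd i).
Proof.
move=> lt_iN; have [odd_n | even_n] := boolP (odd n).
  left; have fwd0n : same_faceM (fwd 0) (fwd n).
    rewrite face_connect_sym; apply: connect_trans same_faceM_fwd_last; fwd_gapM.
  case: (boolP (odd i)) => odd_i; case: (leqP n i) => le_ni.
  - by apply: connect_trans fwd0n _; fwd_gapM.
  - by apply: connect_trans fwd0n _; apply: connect_trans same_faceM_fwdn _; fwd_gapM.
  - by apply: connect_trans same_faceM_fwd0 _; fwd_gapM.
  - by fwd_gapM.
case: (boolP (odd i)) => odd_i; case: (leqP n i) => le_ni.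
- by left; apply: connect_trans same_faceM_fwd0 _; fwd_gapM.
- by right; split => //; fwd_gapM.
- right; split => //; have := same_faceM_fwdn; rewrite face_connect_sym.
  by move/connect_trans; apply; fwd_gapM.
- by left; fwd_gapM.
Qed.

Lemma same_faceM_fwd i :
  same_faceM (fwd 0) (fwd i) \/ ~~ odd n /\ same_faceM (fwd 1) (fwd i).
Proof.
rewrite (@dart_congr _ i (i %% N)) ?modn_mod //.
by apply: same_faceM_fwd_lt; rewrite ltn_pmod ?N_gt0.
Qed.

Lemma same_faceM_back k : 1 <= k <= N -> same_faceM (back 1) (back k).
Proof.
case/andP=> k_ge1 k_leN.
apply: (connect_chain (f := back) (s := 1)); [done | | lia | exact: dvd1n].
move=> j *; rewrite face_connect_sym; apply: fconnect_step.
rewrite faceM_back; decide_mod.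
by apply: dart_congr; apply/eqP; decide_mod.
Qed.

Lemma same_faceM_back1_fwdn : same_faceM (back 1) (fwd n).
Proof.
apply: (connect_trans (y := rung 0)).
  apply: fconnect_step; rewrite faceM_back; decide_mod.
  by apply: dart_congr; apply/eqP; decide_mod.
by apply: fconnect_step; rewrite faceM_rung; decide_mod.
Qed.

Lemma mobius_dart_cases (p : 'I_N * 'I_N) : mobius_adj n p.1 p.2 ->
  exists2 i, i < N & [\/ p = fwd i, p = back i | p = rung i].
Proof.
case: p => x y /=; rewrite -(offsetK x) -(offsetK y).
move: (offset y) (offset_lt x) => j; move: (offset x) => i lt_iN.
rewrite mobius_nbE mem_mobius_nb => adj; exists i => //.
by case/or3P: adj => /eqP/vtx_congr ->; [apply: Or31 | apply: Or32 | apply: Or33].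
Qed.

Lemma same_faceM_cover p : mobius_adj n p.1 p.2 ->
  same_faceM (fwd 0) p \/ ~~ odd n /\ same_faceM (fwd 1) p.
Proof.
case/mobius_dart_cases => i lt_iN.
have via_fwd k d : same_faceM (fwd k) d ->
    same_faceM (fwd 0) d \/ ~~ odd n /\ same_faceM (fwd 1) d.
  case: (same_faceM_fwd k) => [k0 | [even_n k1]] kp.
    by left; apply: connect_trans kp.
  by right; split => //; apply: connect_trans kp.
have fwdn_back k : 1 <= k <= N -> same_faceM (fwd n) (back k).
  move=> k_range; rewrite face_connect_sym.
  apply: connect_trans (same_faceM_back1_fwdn).
  by rewrite face_connect_sym; apply: same_faceM_back.
case=> ->; first by apply: (via_fwd i); apply: connect0.
  apply: (via_fwd n); case: (posnP i) => [-> | i_gt0]; last by apply: fwdn_back; lia.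
  by rewrite (@dart_congr _ 0 N) ?mod0n ?modnn //; apply: fwdn_back; lia.
case: (eqVneq i n) => [-> | i_neq_n].
  apply: (via_fwd n); apply: connect_trans (fwdn_back (n + n) _) _; first lia.
  by rewrite face_connect_sym; apply: fconnect_step; rewrite faceM_rung; decide_mod.
apply: (via_fwd (i + n)); rewrite face_connect_sym; apply: fconnect_step.
by rewrite faceM_rung; decide_mod.
Qed.

Lemma nfacesM : nfaces (mobius_adj n) rotM <= 1 + ~~ odd n.
Proof. exact: nfaces_le_two same_faceM_cover. Qed.

(** * The Moebius ladder minus a vertex *)

Local Notation D := (del_vertex v).
Local Notation del_adj := (del_rel (mobius_adj n) v).

Lemma vtx1_neq_v : vtx 1 != v. Proof. by rewrite vtx_eq_v; decide_mod. Qed.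

(* Vertices of M - v; the junk value at offsets divisible by N is never used. *)
Definition dvtx (i : nat) : D := insubd (exist _ (vtx 1) vtx1_neq_v) (vtx i).

Lemma val_dvtx i : ~~ (i == 0 %[mod N]) -> val (dvtx i) = vtx i.
Proof. by move=> i_neq0; rewrite val_insubd vtx_eq_v (negbTE i_neq0). Qed.

Lemma dvtx_congr i j : i = j %[mod N] -> dvtx i = dvtx j.
Proof. by move=> eq_ij; rewrite /dvtx (vtx_congr eq_ij). Qed.

Lemma dvtx_offset (x : D) : exists2 i, 0 < i < N & x = dvtx i.
Proof.
have i_neq0 : ~~ (offset (val x) == 0 %[mod N]).
  by rewrite -vtx_eq_v offsetK (valP x).
exists (offset (val x)).
  by rewrite offset_lt andbT lt0n; apply: contraNneq i_neq0 => ->.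
by apply: val_inj; rewrite val_dvtx ?offsetK.
Qed.

Definition del_nb (x : D) : seq D := pmap insub (mobius_nb (val x)).

Lemma del_nbE x y : del_adj x y = (y \in del_nb x).
Proof. by rewrite /del_rel mobius_nbE /del_nb mem_pmap_sub. Qed.

Lemma del_nb_uniq x : uniq (del_nb x).
Proof. exact/pmap_sub_uniq/mobius_nb_uniq. Qed.

Lemma del_adj_sym : symmetric del_adj.
Proof. by move=> x y; rewrite /del_rel mobius_adj_sym. Qed.

Lemma val_next_del_nb (x y : D) :
  val (next (del_nb y) x) = next (filter (predC1 v) (mobius_nb (val y))) (val x).
Proof.
rewrite -(next_map val_inj (del_nb_uniq y)) /del_nb (pmap_filter (@insubK _ _ _)).
by congr next; apply: eq_filter => z; rewrite isSome_insub.
Qed.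

Definition rotD : {perm D * D} := rot_nb del_nbE del_nb_uniq.
Local Notation faceD := (face_step rotD).
Local Notation same_faceD := (fconnect faceD).

Lemma faceD_dvtx i j k :
    ~~ (i == 0 %[mod N]) -> ~~ (j == 0 %[mod N]) -> ~~ (k == 0 %[mod N]) ->
    mobius_adj n (vtx j) (vtx i) ->
    next (filter (predC1 v) (mobius_nb (vtx j))) (vtx i) = vtx k ->
  faceD (dvtx i, dvtx j) = (dvtx j, dvtx k).
Proof.
move=> i_neq0 j_neq0 k_neq0 adj_ji next_i.
rewrite face_step_rot_nb; last by rewrite /del_rel !val_dvtx.
by congr pair; apply: val_inj; rewrite val_next_del_nb !val_dvtx.
Qed.

Definition ddart (c i : nat) : D * D := (dvtx i, dvtx (i + c)).
Local Notation dfwd := (ddart 1).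
Local Notation dback := (ddart (N - 1)).
Local Notation drung := (ddart n).

Lemma ddart_congr c i j : i = j %[mod N] -> ddart c i = ddart c j.
Proof.
by move=> /eqP eq_ij; congr pair; apply/dvtx_congr/eqP; rewrite ?eqn_modDr.
Qed.

Ltac faceD_compute := apply: faceD_dvtx; try (by decide_mod);
  try (by rewrite mobius_adj_vtx; decide_mod);
  rewrite mobius_nb_vtx; decide_mod; rewrite /= !vtx_eq_v; decide_mod;
  rewrite /= ?next_seq3 !vtx_eq; decide_mod.

Lemma faceD_fwd i : 0 < i -> i < N - 1 ->
  faceD (dfwd i) = if i == n - 1 then dfwd (i + 1) else drung (i + 1).
Proof.
move=> *; case: eqP => ?; case: (eqVneq i (N - 2)) => ?; try (exfalso; lia).
all: faceD_compute.
Qed.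

Lemma faceD_rung i : 0 < i -> i < N -> i != n ->
  faceD (drung i) = if i == n - 1 then dback (i + n) else dfwd (i + n).
Proof.
move=> *; case: eqP => ?; case: (eqVneq i (n + 1)) => ?; try (exfalso; lia).
all: faceD_compute.
Qed.

Lemma faceD_back i : 1 < i -> i < N ->
  faceD (dback i) = if i == 2 then drung (i + (N - 1)) else dback (i + (N - 1)).
Proof.
move=> *; case: eqP => ?; case: (eqVneq i (n + 1)) => ?; try (exfalso; lia).
all: faceD_compute.
Qed.

Lemma same_faceD_fwd_rung i : 0 < i -> i < N - 1 -> i != n - 1 ->
  same_faceD (dfwd i) (drung (i + 1)).
Proof.
by move=> *; apply: fconnect_step; rewrite faceD_fwd //; case: eqP => //; lia.
Qed.

Lemma same_faceD_rung_fwd i : 0 < i -> i < N -> i != n -> i != n - 1 ->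
  same_faceD (drung i) (dfwd (i + n)).
Proof.
by move=> *; apply: fconnect_step; rewrite faceD_rung //; case: eqP => //; lia.
Qed.

Lemma same_faceD_fwd_add2 i : (0 < i < n - 2) || (n - 1 < i < N - 3) ->
  same_faceD (dfwd i) (dfwd (i + 2)).
Proof.
case/orP => /andP [i_gt i_lt].
  apply: connect_trans (same_faceD_fwd_rung _ _ _) _; try lia.
  apply: connect_trans (same_faceD_rung_fwd _ _ _ _) _; try lia.
  apply: connect_trans (same_faceD_fwd_rung _ _ _) _; try lia.
  apply: connect_trans (same_faceD_rung_fwd _ _ _ _) _; try lia.
  by rewrite (@ddart_congr _ _ (i + 2)) //; apply/eqP; decide_mod.
apply: connect_trans (same_faceD_fwd_rung _ _ _) _; try lia.
apply: connect_trans (same_faceD_rung_fwd _ _ _ _) _; try lia.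
rewrite (@ddart_congr _ (i + 1 + n) (i + 1 - n)); last by apply/eqP; decide_mod.
apply: connect_trans (same_faceD_fwd_rung _ _ _) _; try lia.
apply: connect_trans (same_faceD_rung_fwd _ _ _ _) _; try lia.
by rewrite (_ : i + 1 - n + 1 + n = i + 2) //; lia.
Qed.

Lemma same_faceD_fwd_even_gap a b : a <= b -> 2 %| b - a ->
    (forall j, a <= j -> j + 2 <= b -> (0 < j < n - 2) || (n - 1 < j < N - 3)) ->
  same_faceD (dfwd a) (dfwd b).
Proof.
move=> le_ab even_gap ok; apply: (connect_chain (f := dfwd) (s := 2)) => // j *.
exact/same_faceD_fwd_add2/ok.
Qed.

Ltac fwd_gapD :=
  apply: same_faceD_fwd_even_gap; [lia | rewrite dvdn2; lia | move=> *; lia].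

Lemma same_faceD_back k : 2 <= k < N -> same_faceD (dback 2) (dback k).
Proof.
case/andP=> k_ge2 k_ltN.
apply: (connect_chain (f := dback) (s := 1)); [done | | lia | exact: dvd1n].
move=> j *; rewrite face_connect_sym; apply: fconnect_step; rewrite faceD_back; try lia.
by case: eqP => [|_]; [lia | apply: ddart_congr; apply/eqP; decide_mod].
Qed.

Lemma same_faceD_back2_rung1 : same_faceD (dback 2) (drung 1).
Proof.
apply: fconnect_step; rewrite faceD_back //; try lia.
by apply: ddart_congr; apply/eqP; decide_mod.
Qed.

Lemma same_faceD_fwd_n1 : same_faceD (dfwd (n - 1)) (dfwd n).
Proof.
apply: fconnect_step; rewrite faceD_fwd; try lia; rewrite eqxx.
by apply: ddart_congr; apply/eqP; decide_mod.
Qed.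

Lemma same_faceD_fwd_n2_back : 2 < n -> same_faceD (dfwd (n - 2)) (dback 2).
Proof.
move=> n_gt2; apply: (connect_trans (y := drung (n - 2 + 1))).
  by apply: fconnect_step; rewrite faceD_fwd; try lia; case: eqP => //; lia.
rewrite face_connect_sym; apply: connect_trans (same_faceD_back (k := N - 1) _) _.
  lia.
rewrite face_connect_sym; apply: fconnect_step; rewrite faceD_rung; try lia.
by case: eqP => ?; try lia; apply: ddart_congr; apply/eqP; decide_mod.
Qed.

Lemma same_faceD_fwd_n1_back : 2 < n -> same_faceD (dfwd (n + 1)) (dback 2).
Proof.
move=> n_gt2; rewrite face_connect_sym; apply: connect_trans same_faceD_back2_rung1 _.
apply: fconnect_step; rewrite faceD_rung; try lia.
by case: eqP => ?; try lia; apply: ddart_congr; apply/eqP; decide_mod.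
Qed.

Lemma same_faceD_fwd_last : same_faceD (dfwd (N - 2)) (dfwd (n - 1)).
Proof.
apply: connect_trans (same_faceD_fwd_rung _ _ _) _; try lia.
apply: connect_trans (same_faceD_rung_fwd _ _ _ _) _; try lia.
by rewrite (@ddart_congr _ _ (n - 1)) //; apply/eqP; decide_mod.
Qed.

Lemma same_faceD_fwd i : 0 < i < N - 1 ->
  same_faceD (dback 2) (dfwd i) \/ ~~ odd n /\ same_faceD (dfwd (n - 1)) (dfwd i).
Proof.
case/andP=> i_gt0 i_lt.
have [odd_n | even_n] := boolP (odd n).
  have n_gt2 : 2 < n by lia.
  have back2_fwdn1 : same_faceD (dback 2) (dfwd (n - 1)).
    apply: (connect_trans (y := dfwd (n + 1))).
      by rewrite face_connect_sym; exact: same_faceD_fwd_n1_back.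
    by apply: connect_trans _ same_faceD_fwd_last; fwd_gapD.
  left; case: (boolP (odd i)) => odd_i; case: (leqP n i) => le_ni.
  - apply: connect_trans back2_fwdn1 _.
    by apply: connect_trans same_faceD_fwd_n1 _; fwd_gapD.
  - rewrite face_connect_sym; apply: (connect_trans (y := dfwd (n - 2))).
      by fwd_gapD.
    exact: same_faceD_fwd_n2_back.
  - rewrite face_connect_sym; apply: (connect_trans (y := dfwd (n + 1))).
      by rewrite face_connect_sym; fwd_gapD.
    exact: same_faceD_fwd_n1_back.
  - by apply: connect_trans back2_fwdn1 _; rewrite face_connect_sym; fwd_gapD.
case: (boolP (odd i)) => odd_i; case: (leqP n i) => le_ni.
- left; rewrite face_connect_sym; apply: (connect_trans (y := dfwd (n + 1))).
    by rewrite face_connect_sym; fwd_gapD.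
  by apply: same_faceD_fwd_n1_back; lia.
- by right; split => //; rewrite face_connect_sym; fwd_gapD.
- by right; split => //; apply: connect_trans same_faceD_fwd_n1 _; fwd_gapD.
- left; rewrite face_connect_sym; apply: (connect_trans (y := dfwd (n - 2))).
    by fwd_gapD.
  by apply: same_faceD_fwd_n2_back; lia.
Qed.

Lemma del_dart_cases (p : D * D) : del_adj p.1 p.2 -> exists2 i, 0 < i < N &
  [\/ p = dfwd i /\ i < N - 1, p = dback i /\ 1 < i | p = drung i /\ i != n].
Proof.
case: p => x y /=.
have [i i_range ->] := dvtx_offset x; have [j j_range ->] := dvtx_offset y.
have nz k : 0 < k < N -> ~~ (k == 0 %[mod N]) by case/andP => *; decide_mod.
have j_nz := nz j j_range.
rewrite /del_rel !val_dvtx ?nz // mobius_nbE mem_mobius_nb => adj; exists i => //.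
case/or3P: adj => /eqP eq_j; rewrite (dvtx_congr eq_j); rewrite eq_j in j_nz.
- apply: Or31; split => //.
  have : i != N - 1 by apply: contraNneq j_nz => ->; decide_mod.
  lia_nomod.
- apply: Or32; split => //.
  have : i != 1 by apply: contraNneq j_nz => ->; decide_mod.
  lia_nomod.
- by apply: Or33; split => //; apply: contraNneq j_nz => ->; decide_mod.
Qed.

Lemma same_faceD_cover p : del_adj p.1 p.2 ->
  same_faceD (dback 2) p \/ ~~ odd n /\ same_faceD (dfwd (n - 1)) p.
Proof.
case/del_dart_cases => i /andP [i_gt0 i_lt].
have via_fwd k d : 0 < k < N - 1 -> same_faceD (dfwd k) d ->
    same_faceD (dback 2) d \/ ~~ odd n /\ same_faceD (dfwd (n - 1)) d.
  move=> k_range kd; case: (same_faceD_fwd k_range) => [k0 | [even_n k1]].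
    by left; apply: connect_trans kd.
  by right; split => //; apply: connect_trans kd.
case=> [[-> ?] | [-> ?] | [-> i_neq_n]].
- by apply: (via_fwd i); [lia | apply: connect0].
- by left; apply: same_faceD_back; lia.
case: (eqVneq i (n - 1)) => [i_n1 | i_neq_n1].
  left; apply: (connect_trans (y := dback (N - 1))).
    by apply: same_faceD_back; lia.
  rewrite face_connect_sym; apply: fconnect_step; rewrite faceD_rung // i_n1 eqxx.
  by apply: ddart_congr; apply/eqP; decide_mod.
case: (ltnP (i + n) N) => lt_inN.
  apply: (via_fwd (i + n)); first lia.
  by rewrite face_connect_sym; apply: same_faceD_rung_fwd.
apply: (via_fwd (i - n)); first lia.
rewrite face_connect_sym (@ddart_congr _ (i - n) (i + n)).
  exact: same_faceD_rung_fwd.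
by apply/eqP; decide_mod.
Qed.

Lemma nfacesD : nfaces del_adj rotD <= 1 + ~~ odd n.
Proof. exact: nfaces_le_two same_faceD_cover. Qed.

Lemma nedges_mobius : nedges (mobius_adj n) = 3 * n.
Proof.
rewrite /nedges (card_darts_nb mobius_nbE mobius_nb_uniq).
rewrite (eq_bigr (fun _ => 3)) => [|y _]; last exact: size_mobius_nb.
by rewrite sum_nat_const card_ord; lia.
Qed.

Lemma v_notin_mobius_nb : (v \in mobius_nb v) = false.
Proof. by rewrite -vtx0 mem_mobius_nb; decide_mod. Qed.

Lemma sum_mem_mobius_nb : \sum_y ((v \in mobius_nb y) : nat) = 3.
Proof.
transitivity #|[pred y | v \in mobius_nb y]|.
  rewrite -sum1_card [RHS]big_mkcond; apply: eq_bigr => y _.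
  by rewrite inE; case: (_ \in _).
rewrite (eq_card (B := [pred y in mobius_nb v])) => [|y]; last first.
  by rewrite !inE -!mobius_nbE mobius_adj_sym.
by rewrite (card_uniqP (mobius_nb_uniq v)) size_mobius_nb.
Qed.

Lemma nedges_del : nedges del_adj = 3 * n - 3.
Proof.
rewrite /nedges (card_darts_nb del_nbE del_nb_uniq).
under eq_bigr => x _ do rewrite /del_nb size_pmap_sub.
rewrite (sum_del_vertex v (fun y => count (predC1 v) (mobius_nb y))).
have count_v y : count (predC1 v) (mobius_nb y) + (v \in mobius_nb y) = 3.
  rewrite -(count_uniq_mem _ (mobius_nb_uniq y)) addnC.
  by rewrite -[RHS](size_mobius_nb y) -(count_predC (pred1 v)).
have all_darts : \sum_y (count (predC1 v) (mobius_nb y) + (v \in mobius_nb y)) = 3 * N.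
  by rewrite (eq_bigr _ (fun y _ => count_v y)) sum_nat_const card_ord mulnC.
have := count_v v; rewrite v_notin_mobius_nb addn0 => count_vv.
rewrite big_split /= sum_mem_mobius_nb (bigD1 v) //= count_vv in all_darts.
by move: all_darts; move: (\sum_(y | y != v) _) => X; lia.
Qed.

Lemma card_del : #|{: D}| = N - 1.
Proof. by rewrite card_sig cardC1 card_ord; lia. Qed.

Lemma del_connected : connected_graph del_adj.
Proof.
have path_from1 k : 1 <= k <= N - 1 -> connect del_adj (dvtx 1) (dvtx k).
  case/andP=> k_ge1 k_le.
  apply: (connect_chain (f := dvtx) (s := 1)); [done | | lia | exact: dvd1n].
  move=> j *; apply: connect1; rewrite /del_rel !val_dvtx; try decide_mod.
  by rewrite mobius_adj_vtx; decide_mod.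
move=> x y; have [i i_range ->] := dvtx_offset x; have [j j_range ->] := dvtx_offset y.
apply: (connect_trans (y := dvtx 1)); last by apply: path_from1; lia.
by rewrite (sym_connect_sym del_adj_sym); apply: path_from1; lia.
Qed.

Lemma max_genus_mobius : max_genus (mobius_adj n) = (n + 1)./2.
Proof.
have rank : cycle_rank (mobius_adj n) = n + 1.
  by rewrite /cycle_rank nedges_mobius card_ord; lia.
rewrite -rank; apply: (max_genusE mobius_adj_sym (r := rotM) (p := fwd 0)).
- by rewrite /is_dart /= mobius_adj_vtx; decide_mod.
- exact: rotation_system_rot_nb.
- by rewrite rank addn1 /=; exact: nfacesM.
Qed.

Lemma max_genus_del : max_genus del_adj = (n - 1)./2.
Proof.
have rank : cycle_rank del_adj = n - 1.
  by rewrite /cycle_rank nedges_del card_del; lia.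
rewrite -rank; apply: (max_genusE del_adj_sym (r := rotD) (p := dfwd 1)).
- rewrite /is_dart /= /del_rel !val_dvtx; try decide_mod.
  by rewrite mobius_adj_vtx; decide_mod.
- exact: rotation_system_rot_nb.
- have odd_pred : odd (n - 1) = ~~ odd n.
    by rewrite -[in RHS](subnK (ltnW n_ge2)) addn1 /= negbK.
  by rewrite rank odd_pred; exact: nfacesD.
Qed.

End MobiusLadder.

Theorem theorem2p1 (n : nat) (hn : 2 <= n) (v : 'I_(n.*2)) :
  connected_graph (del_rel (mobius_adj n) v) /\
  max_genus (del_rel (mobius_adj n) v) + 1 = max_genus (mobius_adj n).
Proof.
split; first exact: del_connected.
by rewrite (max_genus_del hn v) (max_genus_mobius hn v); lia.
Qed.
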